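(* Let $A$ be any $K$-algebra and suppose there are two short exact sequences of finite-dimensional $A$-modules $0\to x_2\to x\to x_1\to 0$ and $0\to x_1\to x\to x_3\to0$. Assume that $\operatorname{Ext}^1_A(x_1,x_1)=0$, $\dim\operatorname{Hom}_A(x_1,x_2)=\dim\operatorname{Hom}_A(x_1,x_3)$ and $\dim\operatorname{Hom}_A(x_2,x_1)=\dim\operatorname{Hom}_A(x_3,x_1)$. Then both short exact sequences split (and hence $x_3\simeq x_2$).
   Context: $K$ is a field (algebraically closed in the paper's setting). *)

From HB Require Import structures.
From mathcomp Require Import all_boot all_order all_algebra.
Set Implicit Arguments. Unset Strict Implicit. Unset Printing Implicit Defensive.
Import GRing.Theory.
Local Open Scope ring_scope.

(* A finite-dimensional (left) A-module, for A a K-algebra: a K-vector space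
   K^dim (column vectors 'cV_dim) with a K-algebra morphism A -> End_K(K^dim),
   given as matrices acting on column vectors. *)
Record fdmod (K : fieldType) (A : algType K) := FDMod {
  mdim : nat;
  act : A -> 'M[K]_mdim;
  act_linear : forall (k : K) (a b : A), act (k *: a + b) = k *: act a + act b;
  act_mul : forall a b : A, act (a * b) = act a *m act b;
  act_one : act 1 = 1%:M
}.

Section Defs.
Variables (K : fieldType) (A : algType K).

Definition is_hom (X Y : fdmod A) (h : 'M[K]_(mdim Y, mdim X)) : Prop :=
  forall a : A, h *m act X a = act Y a *m h.

(* dim_K Hom_A(X, Y) = d : the homomorphisms form the row space of a
   row-free matrix (a basis) with d rows, via the vectorization mxvec. *)
Definition HomDim (X Y : fdmod A) (d : nat) : Prop :=
  exists F : 'M[K]_(d, mdim Y * mdim X),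
    row_free F /\
    forall h : 'M[K]_(mdim Y, mdim X), is_hom h <-> (mxvec h <= F)%MS.

Definition ses (X Y Z : fdmod A)
    (f : 'M[K]_(mdim Y, mdim X)) (g : 'M[K]_(mdim Z, mdim Y)) : Prop :=
  [/\ is_hom f, is_hom g,
      (forall u : 'cV[K]_(mdim X), f *m u = 0 -> u = 0),
      (forall v : 'cV[K]_(mdim Y), g *m v = 0 <-> exists u, v = f *m u)
    & (forall w : 'cV[K]_(mdim Z), exists v, g *m v = w)].

Definition ses_splits (X Y Z : fdmod A)
    (f : 'M[K]_(mdim Y, mdim X)) (g : 'M[K]_(mdim Z, mdim Y)) : Prop :=
  exists s : 'M[K]_(mdim Y, mdim Z), is_hom s /\ g *m s = 1%:M.

(* Ext^1_A(X, Z) = 0 (Yoneda): every extension 0 -> Z -> Y -> X -> 0 splits. *)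
Definition Ext1_zero (X Z : fdmod A) : Prop :=
  forall (Y : fdmod A) (f : 'M[K]_(mdim Y, mdim Z)) (g : 'M[K]_(mdim X, mdim Y)),
    ses f g -> ses_splits f g.

Definition mod_iso (X Y : fdmod A) : Prop :=
  exists (h : 'M[K]_(mdim Y, mdim X)) (k : 'M[K]_(mdim X, mdim Y)),
    [/\ is_hom h, is_hom k, h *m k = 1%:M & k *m h = 1%:M].

End Defs.

(* Hom(x1, -) applied to the second sequence is right exact because
   Ext^1(x1, x1) = 0, so dim Hom(x1, x) = dim Hom(x1, x1) + dim Hom(x1, x3)
   = dim Hom(x1, x1) + dim Hom(x1, x2).  For the first sequence this equality
   forces Hom(x1, x) -> Hom(x1, x1) to be onto, so the identity of x1 lifts and
   the first sequence splits; dually, Hom(-, x1) splits the second one.  Then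
   x is isomorphic to both x1 (+) x2 and x1 (+) x3, and x2 ~= x3 follows by
   cancellation, proved for idempotents of End_A(x): if E = e1 + e2 = f1 + f3
   are orthogonal decompositions and e1 is equivalent to f1, then e2 is
   equivalent to f3.  This goes by induction on the rank of e1, using the
   Fitting decomposition of e1 f1 e1 in the corner ring e1 End_A(x) e1. *)

From mathcomp Require Import all_boot all_order all_algebra ring zify.
From Stdlib Require Import Classical.
Set Implicit Arguments. Unset Strict Implicit. Unset Printing Implicit Defensive.
Import GRing.Theory.
Local Open Scope ring_scope.

(** * Fitting decomposition *)

Section Fitting.
Variable K : fieldType.

(* With char_poly s = q X^k and u X^(k+1) + v q = 1, the Fitting idempotent is
   (u X^(k+1)).[s], and the geometric sum m inverts 1 - X modulo X^(k+1). *)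
Lemma fitting_poly n (s : 'M[K]_n.+1) : exists t m : {poly K},
  horner_mx s (('X * t) * ('X * t)) = horner_mx s ('X * t) /\
  horner_mx s (m * (1 - 'X) * (1 - 'X * t)) = horner_mx s (1 - 'X * t).
Proof.
have chi_neq0 : char_poly s != 0 by rewrite monic_neq0 // char_poly_monic.
have [k [q]] := multiplicity_XsubC (char_poly s) 0.
rewrite chi_neq0 subr0 /= => q0_neq0 Dchi.
have /Bezout_eq1_coprimepP [[u v] /= bezout] : coprimep ('X ^+ k.+1) q.
  by rewrite coprimep_expl // coprimep_sym coprimepX.
have vq : v * q = 1 - u * 'X ^+ k.+1 by rewrite -bezout addrC addKr.
have ev_mod p r : horner_mx s (p - r * char_poly s) = horner_mx s p.
  by rewrite rmorphB [Y in _ - Y]rmorphM /= Cayley_Hamilton mulr0 subr0.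
pose t := u * 'X ^+ k; pose m := \sum_(i < k.+1) 'X ^+ i : {poly K}.
exists t, m; split.
  rewrite -[RHS](ev_mod _ (u * v * 'X)); congr (horner_mx s _).
  by rewrite Dchi -[X in X - _]mulr1 -bezout /t exprS; ring.
rewrite -[RHS](ev_mod _ (v * 'X)); congr (horner_mx s _).
have -> : m * (1 - 'X) = 1 - 'X ^+ k.+1.
  rewrite -[1 in RHS](expr1n _ k.+1) subrXX mulrC; congr (_ * _).
  by apply: eq_bigr => i _; rewrite expr1n mul1r.
have -> : v * 'X * char_poly s = 'X ^+ k.+1 * (v * q) by rewrite Dchi exprS; ring.
by rewrite vq /t exprS; ring.
Qed.

(* s T is the Fitting idempotent of s: T inverts s on its range, and M inverts
   1 - s on the range of 1 - s T, where s is nilpotent. *)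
Lemma fitting n (s : 'M[K]_n) : exists T M : 'M[K]_n,
  [/\ forall c, c * s = s * c -> c * T = T * c /\ c * M = M * c,
      (s * T) * (s * T) = s * T
    & M * (1 - s) * (1 - s * T) = 1 - s * T].
Proof.
case: n s => [|n] s.
  by exists 0, 0; split=> [c _||]; try split; apply/matrixP => -[].
have [t [m [idem unit]]] := fitting_poly s.
have comm_ev c p : c * s = s * c -> c * horner_mx s p = horner_mx s p * c.
  by move=> cs; apply: (comm_mx_horner p cs).
exists (horner_mx s t), (horner_mx s m); split.
- by move=> c cs; split; apply: comm_ev.
- by move: idem; rewrite !rmorphM /= horner_mx_X.
- by move: unit; rewrite !(rmorphM, rmorphB, rmorph1) /= horner_mx_X.
Qed.

End Fitting.

(** * Cancellation of idempotents *)

Lemma mulrA_eq (R : pzRingType) (x y z : R) : x * y = z -> forall w, w * x * y = w * z.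
Proof. by move=> xy w; rewrite -mulrA xy. Qed.

Section IdempotentCancellation.
Variables (K : fieldType) (n : nat) (I : Type) (S : I -> 'M[K]_n).
Implicit Types (a b e f g u v w x y E : 'M[K]_n).

(* For S := act X this is is_hom on endomorphisms of X, by conversion. *)
Definition centralizes x := forall i, x * S i = S i * x.

Lemma centralizesD x y : centralizes x -> centralizes y -> centralizes (x + y).
Proof. by move=> cx cy i; rewrite mulrDl mulrDr cx cy. Qed.

Lemma centralizesB x y : centralizes x -> centralizes y -> centralizes (x - y).
Proof. by move=> cx cy i; rewrite mulrBl mulrBr cx cy. Qed.

Lemma centralizesM x y : centralizes x -> centralizes y -> centralizes (x * y).
Proof. by move=> cx cy i; rewrite -mulrA cy !mulrA cx. Qed.

Definition orth_idem e1 e2 := [/\ e1 * e1 = e1, e2 * e2 = e2, e1 * e2 = 0 & e2 * e1 = 0].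

Definition idem_decomp E e1 e2 :=
  [/\ centralizes e1, centralizes e2, orth_idem e1 e2 & e1 + e2 = E].

(* Murray-von Neumann equivalence in the centralizer of S, witnessed by
   mutually inverse a in f R e and b in e R f. *)
Definition equiv_by e f a b :=
  [/\ centralizes a /\ centralizes b, f * a * e = a, e * b * f = b, b * a = e & a * b = f].

Definition idem_equiv e f := exists a b, equiv_by e f a b.

Lemma corner_id e f a : e * e = e -> f * f = f -> f * a * e = a -> f * a = a /\ a * e = a.
Proof. by move=> ee ff <-; rewrite !mulrA ff -!mulrA ee. Qed.

Lemma idem_decomp_compl E e : centralizes E -> centralizes e ->
  E * E = E -> e * e = e -> e * E = e -> E * e = e -> idem_decomp E e (E - e).
Proof.
move=> cE ce EE ee eE Ee; split=> //; first exact: centralizesB.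
  by split; rewrite ?mulrBl ?mulrBr ?EE ?ee ?eE ?Ee ?subrr ?subr0.
by rewrite addrC subrK.
Qed.

Lemma corner_unit_sym e a v : e * e = e -> e * a * e = a -> e * v * e = v ->
  v * a = e -> a * v = e.
Proof.
move=> ee aC vC va; have [ea ae] := corner_id ee ee aC; have [ev ve] := corner_id ee ee vC.
have killr x : x * e = x -> x * (1 - e) = 0 by move=> xe; rewrite mulrBr mulr1 xe subrr.
have killl x : e * x = x -> (1 - e) * x = 0 by move=> ex; rewrite mulrBl mul1r ex subrr.
have ee' : (1 - e) * (1 - e) = 1 - e by rewrite mulrBl mul1r mulrBr mulr1 ee subrr subr0.
have /mulmx1C : (v + (1 - e)) *m (a + (1 - e)) = 1%:M.
  rewrite -/(_ * _) mulrDl [v * _]mulrDr [(1 - e) * _]mulrDr.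
  by rewrite va killr // killl // ee' addr0 add0r addrC subrK.
rewrite -/(_ * _) mulrDl (mulrDr a) (mulrDr (1 - e)).
rewrite killr // killl // ee' addr0 add0r.
by move/(canRL (addrK _)) ->; rewrite opprB addrC subrK.
Qed.

Lemma idem_rank_lt e eps : eps * eps = eps -> eps * e = eps -> e * eps = eps ->
  eps != e -> (\rank eps < \rank e)%N.
Proof.
move=> epsK epse eeps neq; apply: rank_ltmx; rewrite ltmxE.
rewrite -[X in (X <= _)%MS]epse -mulmxE submxMl /=; apply: contra neq => /submxP [D De].
by rewrite -eeps {1}De -mulmxE -mulmxA mulmxE epsK -mulmxE -De.
Qed.

Lemma mul_orth x y z z' : x * z = x -> z * z' = 0 -> z' * y = y -> x * y = 0.
Proof. by move=> <- zz' <-; rewrite mulrA -(mulrA x) zz' mulr0 mul0r. Qed.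

Lemma equiv_add e e' f f' a a' b b' : orth_idem e e' -> orth_idem f f' ->
  equiv_by e f a b -> equiv_by e' f' a' b' ->
  equiv_by (e + e') (f + f') (a + a') (b + b').
Proof.
move=> [ee e'e' ee' e'e] [ff f'f' ff' f'f].
move=> [[ca cb] aC bC ba ab] [[ca' cb'] a'C b'C b'a' a'b'].
have [fa ae] := corner_id ee ff aC; have [eb bf] := corner_id ff ee bC.
have [f'a' a'e'] := corner_id e'e' f'f' a'C; have [e'b' b'f'] := corner_id f'f' e'e' b'C.
have fa' := mul_orth ff ff' f'a'; have f'a := mul_orth f'f' f'f fa.
have ae' := mul_orth ae ee' e'e'; have a'e := mul_orth a'e' e'e ee.
have eb' := mul_orth ee ee' e'b'; have e'b := mul_orth e'e' e'e eb.
have bf' := mul_orth bf ff' f'f'; have b'f := mul_orth b'f' f'f ff.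
have ba' := mul_orth bf ff' f'a'; have b'a := mul_orth b'f' f'f fa.
have ab' := mul_orth ae ee' e'b'; have a'b := mul_orth a'e' e'e eb.
split; first by split; apply: centralizesD.
- rewrite !(mulrDl, mulrDr) fa fa' f'a f'a' !mul0r ae ae' a'e a'e'.
  by rewrite !(addr0, add0r).
- rewrite !(mulrDl, mulrDr) eb eb' e'b e'b' !mul0r bf bf' b'f b'f'.
  by rewrite !(addr0, add0r).
- by rewrite !(mulrDl, mulrDr) ba ba' b'a b'a' addr0 add0r.
- by rewrite !(mulrDl, mulrDr) ab ab' a'b a'b' addr0 add0r.
Qed.

Lemma equiv_by_retract e a b : centralizes a -> centralizes b -> centralizes e ->
  e * e = e -> b * a = e -> e * b = b -> equiv_by e (a * b) (a * e) b.
Proof.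
move=> ca cb ce ee ba eb; split; first by split=> //; apply: centralizesM.
- by rewrite -!mulrA (mulrA b) ba !mulrA !(mulrA_eq ee).
- by rewrite !mulrA eb ba eb.
- by rewrite mulrA ba ee.
- by rewrite -mulrA eb.
Qed.

(* Q = E - v pi and Q' = E - al pi both project onto ker pi, which is thus a
   common complement of e1 and of f1 in E. *)
Lemma equiv_common_complement E e1 e2 f1 f3 al be u v pi :
  idem_decomp E e1 e2 -> idem_decomp E f1 f3 ->
  equiv_by e1 f1 al be -> equiv_by e1 e1 u v ->
  [/\ centralizes pi, e1 * pi = pi, pi * E = pi, pi * e1 = u & pi * al = e1] ->
  idem_equiv e2 f3.
Proof.
move=> [ce1 ce2 [e11 e22 e12 e21] DE] [_ cf3 [f11 f33 _ f31] DE'].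
move=> [[cal _] alC _ _ albe] [[_ cv] _ vC vu uv] [cpi e1pi piE pie1 pial].
have [f1al ale1] := corner_id e11 f11 alC; have [e1v _] := corner_id e11 e11 vC.
have cE : centralizes E by rewrite -DE; apply: centralizesD.
have EE : E * E = E by rewrite -DE mulrDl !mulrDr e11 e12 e21 e22 addr0 add0r.
have Ee1 : E * e1 = e1 by rewrite -DE mulrDl e11 e21 addr0.
have De2 : e2 = E - e1 by rewrite -DE addrC addKr.
have Df3 : f3 = E - f1 by rewrite -DE' addrC addKr.
have Ev : E * v = v by rewrite -e1v mulrA Ee1.
have Eal : E * al = al by rewrite -DE' mulrDl f1al -f1al mulrA f31 mul0r addr0.
have f3E : f3 * E = f3 by rewrite -DE' mulrDr f31 f33 add0r.
have e2E : e2 * E = e2 by rewrite -DE mulrDr e21 e22 add0r.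
pose Q := E - v * pi; pose Q' := E - al * pi.
have piv : pi * v = e1 by rewrite -e1v mulrA pie1 uv.
have QE : Q * E = Q by rewrite mulrBl EE -mulrA piE.
have Qe2 : Q * e2 = Q.
  by rewrite De2 mulrBr QE mulrBl Ee1 -mulrA pie1 vu subrr subr0.
have Q'f3 : Q' * f3 = Q'.
  have Q'al : Q' * al = 0 by rewrite mulrBl Eal -mulrA pial ale1 subrr.
  by rewrite Df3 mulrBr mulrBl EE -mulrA piE -albe mulrA Q'al mul0r subr0.
have Q'Q : Q' * Q = Q.
  by rewrite mulrBl mulrBr EE mulrA Ev -mulrA mulrBr piE mulrA piv e1pi subrr mulr0 subr0.
have QQ' : Q * Q' = Q'.
  by rewrite mulrBl mulrBr EE mulrA Eal -mulrA mulrBr piE mulrA pial e1pi subrr mulr0 subr0.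
have cQ : centralizes Q by apply: centralizesB => //; apply: centralizesM.
have cQ' : centralizes Q' by apply: centralizesB => //; apply: centralizesM.
exists (f3 * Q * e2), (e2 * Q' * f3); split.
- by split; repeat apply: centralizesM.
- by rewrite !mulrA f33 -mulrA e22.
- by rewrite !mulrA e22 -mulrA f33.
- rewrite !mulrA (mulrA_eq f33) (mulrA_eq Q'f3) (mulrA_eq Q'Q) (mulrA_eq Qe2).
  by rewrite mulrBr e2E mulrA -e1v mulrA e21 !mul0r subr0.
- rewrite !mulrA (mulrA_eq e22) (mulrA_eq Qe2) (mulrA_eq QQ') (mulrA_eq Q'f3).
  by rewrite mulrBr f3E mulrA -f1al mulrA f31 !mul0r subr0.
Qed.

Lemma fitting_corner e s : e * e = e -> e * s * e = s -> centralizes s ->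
  exists eps w M, [/\ [/\ centralizes eps, centralizes w & centralizes M],
    [/\ eps * eps = eps, e * eps = eps & eps * e = eps],
    w * s = eps, eps * w = w
  & (e - eps) * M * (e - s) = e - eps /\ M * e = e * M].
Proof.
move=> ee sC cs; have [es se] := corner_id ee ee sC.
have [T [M [bicomm idem unit]]] := fitting s.
have comm_s c : GRing.comm c s -> GRing.comm c T /\ GRing.comm c M := bicomm c.
have [sT sM] := comm_s s (commr_refl s).
have [eT eM] : GRing.comm e T /\ GRing.comm e M by apply: comm_s; rewrite /GRing.comm es se.
have [_ TM] := comm_s T (commr_sym sT).
have cT : centralizes T by move=> i; exact/commr_sym/(comm_s _ (commr_sym (cs i))).1.
have cM : centralizes M by move=> i; exact/commr_sym/(comm_s _ (commr_sym (cs i))).2.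
pose eps := s * T.
have epsT : GRing.comm eps T by apply: commr_sym; apply: commrM.
have eepsC : GRing.comm e eps by apply: commrM; rewrite /GRing.comm ?es ?se.
have eeps : e * eps = eps by rewrite mulrA es.
exists eps, (T * eps), M; split.
- by split; do ?apply: centralizesM.
- by split; rewrite -?eepsC.
- by rewrite mulrA -sT -mulrA -sT idem.
- by rewrite mulrA epsT -mulrA idem.
split; last by rewrite eM.
have commM : GRing.comm (1 - eps) (M * (1 - s)).
  apply: commr_sym; apply: commrB; first exact: commr1.
  apply: commr_sym; apply: commrM.
    by apply/commr_sym/commrM; apply/commr_sym.
  by apply: commrB; [apply: commr1 | apply/commr_sym/commrM].
have e_s : e - s = (1 - s) * e by rewrite mulrBl mul1r se.
have e_eps : e - eps = (1 - eps) * e by rewrite mulrBl mul1r -eepsC eeps.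
have eMs : GRing.comm e (M * (1 - s)).
  by apply: commrM => //; apply: commrB; [apply: commr1 | rewrite /GRing.comm es se].
rewrite e_s mulrA -(mulrA (e - eps)) e_eps -(mulrA _ e) eMs mulrA commM unit.
by rewrite -mulrA ee.
Qed.

Definition idem_cancel_below r := forall E e1 e2 f1 f3, (\rank e1 < r)%N ->
  idem_decomp E e1 e2 -> idem_decomp E f1 f3 -> idem_equiv e1 f1 -> idem_equiv e2 f3.

Lemma fitting_unit e eps w a a' : idem_cancel_below (\rank e) ->
  e * e = e -> centralizes e -> centralizes a -> centralizes a' ->
  e * a * e = a -> e * a' * e = a' ->
  [/\ centralizes eps, centralizes w, eps * eps = eps, e * eps = eps & eps * e = eps] ->
  w * (a' * a) = eps -> eps * w = w ->
  exists u v, equiv_by e e u v /\ u * eps = a * eps.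
Proof.
move=> IH ee ce ca ca' aC a'C [ceps cw epsK eeps epse] wa'a epsw.
have [ea _] := corner_id ee ee aC; have [_ a'e] := corner_id ee ee a'C.
pose b := w * a'; have cb : centralizes b by apply: centralizesM.
have ba : b * a = eps by rewrite -mulrA.
have epsb : eps * b = b by rewrite mulrA epsw.
have eqv : equiv_by eps (a * b) (a * eps) b := equiv_by_retract ca cb ceps epsK ba epsb.
have bC : e * b * e = b by rewrite -{1}epsb mulrA eeps epsb /b -mulrA a'e.
clearbody b; have [_ be] := corner_id ee ee bC.
have deps : idem_decomp e eps (e - eps) := idem_decomp_compl ce ceps ee epsK epse eeps.
have [eps_e | neq] := eqVneq eps e.
  have ab_e : a * b = e := corner_unit_sym ee aC bC (etrans ba eps_e).
  exists (a * eps), b; split; last by rewrite -mulrA epsK.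
  by rewrite eps_e; move: eqv; rewrite ab_e eps_e.
have dab : idem_decomp e (a * b) (e - a * b).
  apply: idem_decomp_compl => //; first exact: centralizesM.
  - by rewrite !mulrA (mulrA_eq ba) (mulrA_eq epsb).
  - by rewrite -mulrA be.
  - by rewrite mulrA ea.
have [h [k eqv']] : idem_equiv (e - eps) (e - a * b).
  by apply: (IH e eps _ (a * b)) => //; [apply: idem_rank_lt | exists (a * eps), b].
have [_ _ orth_eps _] := deps; have [_ _ orth_ab _] := dab.
have := equiv_add orth_eps orth_ab eqv eqv'; rewrite (addrC eps) (addrC (a * b)) !subrK.
exists (a * eps + h), (b + k); split=> //.
have [_ eps'K _ eps'eps] := orth_eps; have [_ ab'K _ _] := orth_ab.
have [_ hC _ _ _] := eqv'; have [_ he] := corner_id eps'K ab'K hC.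
by rewrite mulrDl (mulrA_eq epsK) (mul_orth he eps'eps epsK) addr0.
Qed.

Lemma fitting_retraction E e1 e2 f1 f3 al be eps M u :
  idem_decomp E e1 e2 -> idem_decomp E f1 f3 -> equiv_by e1 f1 al be ->
  centralizes eps -> centralizes M -> centralizes u -> e1 * u * e1 = u ->
  eps * e1 = eps -> M * e1 = e1 * M ->
  (e1 - eps) * M * (e1 - e1 * f1 * e1) = e1 - eps -> u * eps = be * e1 * eps ->
  exists pi, [/\ centralizes pi, e1 * pi = pi, pi * E = pi, pi * e1 = u & pi * al = e1].
Proof.
move=> [ce1 _ [e11 _ e12 _] DE] [_ cf3 [f11 f33 f13 f31] DE'].
move=> [[_ cbe] alC beC beal _] ceps cM cu uC epse1 Me1 Mcompl ueps.
have [e1be bef1] := corner_id f11 e11 beC; have [f1al _] := corner_id e11 f11 alC.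
have [e1u ue1] := corner_id e11 e11 uC.
have f1E : f1 * E = f1 by rewrite -DE' mulrDr f11 f13 addr0.
have f3E : f3 * E = f3 by rewrite -DE' mulrDr f31 f33 add0r.
have e1f3e1 : e1 * f3 * e1 = e1 - e1 * f1 * e1.
  have e1E : e1 * E = e1 by rewrite -DE mulrDr e11 e12 addr0.
  by rewrite -[f3](addKr f1) DE' mulrDr e1E mulrN mulrDl mulNr e11 addrC.
have u_a : (u - be * e1) * (e1 - eps) = u - be * e1.
  by rewrite mulrBr !mulrBl ue1 ueps (mulrA_eq e11) subrr subr0.
pose y := (u - be * e1) * (e1 - eps) * M.
have e1y : e1 * y = y by rewrite /y !mulrA (mulrBr e1) e1u mulrA e1be.
have ye1 : y * e1 = y.
  have epsC : (e1 - eps) * e1 = e1 - eps by rewrite mulrBl e11 epse1.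
  by rewrite /y -mulrA Me1 mulrA (mulrA_eq epsC).
exists (be + y * f3); split.
- by apply: centralizesD => //; repeat (apply: centralizesM || apply: centralizesB).
- by rewrite mulrDr e1be mulrA e1y.
- by rewrite mulrDl -{1}bef1 -!mulrA f1E f3E bef1.
- rewrite mulrDl -ye1 -(mulrA y) -mulrA e1f3e1 /y -mulrA -mulrA (mulrA (e1 - eps)).
  by rewrite Mcompl u_a addrC subrK.
- by rewrite mulrDl beal -mulrA -f1al (mulrA f3) f31 mul0r mulr0 addr0.
Qed.

Lemma idem_equiv_cancel_step E e1 e2 f1 f3 : idem_cancel_below (\rank e1) ->
  idem_decomp E e1 e2 -> idem_decomp E f1 f3 -> idem_equiv e1 f1 -> idem_equiv e2 f3.
Proof.
move=> IH de df [al [be eqv]].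
have [ce1 _ [e11 _ _ _] _] := de; have [cf1 _ [f11 _ _ _] _] := df.
have [[cal cbe] alC beC _ albe] := eqv.
have [e1be _] := corner_id f11 e11 beC; have [_ ale1] := corner_id e11 f11 alC.
have aC : e1 * (be * e1) * e1 = be * e1 by rewrite mulrA e1be -mulrA e11.
have a'C : e1 * (e1 * al) * e1 = e1 * al by rewrite mulrA e11 -mulrA ale1.
have sE : e1 * al * (be * e1) = e1 * f1 * e1 by rewrite mulrA -(mulrA e1 al) albe.
have sC : e1 * (e1 * f1 * e1) * e1 = e1 * f1 * e1 by rewrite !mulrA e11 -mulrA e11.
have [eps [w [M [[ceps cw cM] [epsK e1eps epse1] ws epsw [Mcompl Me1]]]]] :=
  fitting_corner e11 sC (centralizesM (centralizesM ce1 cf1) ce1).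
have [u [v [eqv_u ueps]]] : exists u v, equiv_by e1 e1 u v /\ u * eps = be * e1 * eps.
  apply: (fitting_unit (w := w) IH e11 ce1 _ _ aC a'C); rewrite ?sE //;
    exact: centralizesM.
have [[cu _] uC _ _ _] := eqv_u.
have [pi retr] := fitting_retraction de df eqv ceps cM cu uC epse1 Me1 Mcompl ueps.
exact: equiv_common_complement de df eqv eqv_u retr.
Qed.

Lemma idem_equiv_cancel E e1 e2 f1 f3 :
  idem_decomp E e1 e2 -> idem_decomp E f1 f3 -> idem_equiv e1 f1 -> idem_equiv e2 f3.
Proof.
have [r] := ubnP (\rank e1); elim: r => // r IH in E e1 e2 f1 f3 * => lt_r.
apply: idem_equiv_cancel_step => E' e1' e2' f1' f3' lt'.
by apply: IH; apply: leq_trans lt' _.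
Qed.

End IdempotentCancellation.

(** * Short exact sequences of modules *)

Section MatrixColumns.
Variable R : pzRingType.

Lemma col_mulmx m n p j (B : 'M[R]_(m, n)) (C : 'M[R]_(n, p)) : col j (B *m C) = B *m col j C.
Proof. by rewrite !colE mulmxA. Qed.

Lemma cols_eq0 m n (M : 'M[R]_(m, n)) : (forall j, col j M = 0) -> M = 0.
Proof. by move=> M0; apply/matrixP => i j; have /matrixP/(_ i 0) := M0 j; rewrite !mxE. Qed.

Lemma mulmx_solve_cols m n p (f : 'M[R]_(m, n)) (B : 'M[R]_(m, p)) :
  (forall j, exists v, f *m v = col j B) -> exists D, f *m D = B.
Proof.
move=> solvable; have [U fU] := fin_all_exists solvable.
exists (\matrix_(i, j) U j i 0); apply/matrixP => i j.
have /matrixP/(_ i 0) := fU j; rewrite !mxE => <-.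
by apply: eq_bigr => k _; rewrite !mxE.
Qed.

End MatrixColumns.

Section Modules.
Variables (K : fieldType) (A : algType K).
Implicit Types W X Y Z : fdmod A.

Lemma is_hom_mul X Y Z (u : 'M[K]_(mdim Z, mdim Y)) (v : 'M[K]_(mdim Y, mdim X)) :
  is_hom u -> is_hom v -> is_hom (u *m v).
Proof. by move=> hu hv a; rewrite -mulmxA hv !mulmxA hu. Qed.

Lemma is_hom1 X : is_hom (1%:M : 'M[K]_(mdim X)).
Proof. by move=> a; rewrite mul1mx mulmx1. Qed.

Lemma is_homB X Y (u v : 'M[K]_(mdim Y, mdim X)) : is_hom u -> is_hom v -> is_hom (u - v).
Proof. by move=> hu hv a; rewrite mulmxBl mulmxBr hu hv. Qed.

Lemma ses_linear_split X Y Z (f : 'M[K]_(mdim Y, mdim X)) (g : 'M[K]_(mdim Z, mdim Y)) :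
  ses f g -> exists (sg : 'M[K]_(mdim Y, mdim Z)) (rh : 'M[K]_(mdim X, mdim Y)),
   [/\ g *m sg = 1%:M, rh *m f = 1%:M, f *m rh + sg *m g = 1%:M & g *m f = 0].
Proof.
case=> _ _ f_inj kerg g_onto.
have gf : g *m f = 0.
  by apply: cols_eq0 => j; rewrite col_mulmx; apply/kerg; exists (delta_mx j 0); rewrite colE.
have [sg gsg] : exists sg, g *m sg = 1%:M by apply: mulmx_solve_cols => j; apply: g_onto.
have [rh frh] : exists rh, f *m rh = 1%:M - sg *m g.
  apply: mulmx_solve_cols => j.
  have [u ->] : exists u, col j (1%:M - sg *m g) = f *m u.
    by apply/kerg; rewrite -col_mulmx mulmxBr mulmx1 mulmxA gsg mul1mx subrr col0.
  by exists u.
exists sg, rh; split => //; last by rewrite frh subrK.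
apply/eqP; rewrite -subr_eq0; apply/eqP/cols_eq0 => j; apply: f_inj.
by rewrite -col_mulmx mulmxBr mulmxA frh mulmxBl mul1mx -mulmxA gf mulmx0 subr0 mulmx1 subrr col0.
Qed.

Section ShortExactSequence.
Variables (X Y Z : fdmod A) (f : 'M[K]_(mdim Y, mdim X)) (g : 'M[K]_(mdim Z, mdim Y)).
Hypothesis fg : ses f g.

Lemma ses_mono p (u v : 'M[K]_(mdim X, p)) : f *m u = f *m v -> u = v.
Proof.
have [_ [rh [_ rf _ _]]] := ses_linear_split fg.
by move/(congr1 (mulmx rh)); rewrite !mulmxA rf !mul1mx.
Qed.

Lemma ses_epi p (u v : 'M[K]_(p, mdim Z)) : u *m g = v *m g -> u = v.
Proof.
have [sg [_ [gs _ _ _]]] := ses_linear_split fg.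
by move/(congr1 (mulmx^~ sg)); rewrite -!mulmxA gs !mulmx1.
Qed.

Lemma ses_gf : g *m f = 0.
Proof. by have [sg [rh [_ _ _ ->]]] := ses_linear_split fg. Qed.

Lemma ses_hom_kerl W (x : 'M[K]_(mdim Y, mdim W)) : is_hom x -> g *m x = 0 ->
  exists2 y : 'M[K]_(mdim X, mdim W), is_hom y & x = f *m y.
Proof.
move=> hx gx; have [hf _ _ _ _] := fg; have [sg [rh [_ _ split _]]] := ses_linear_split fg.
have Dx : x = f *m (rh *m x).
  by rewrite mulmxA -[x in LHS]mul1mx -split mulmxDl -(mulmxA sg) gx mulmx0 addr0.
exists (rh *m x) => // a; set y := rh *m x in Dx *; apply: ses_mono.
by rewrite mulmxA -Dx hx Dx !mulmxA hf.
Qed.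

Lemma ses_hom_kerr W (x : 'M[K]_(mdim W, mdim Y)) : is_hom x -> x *m f = 0 ->
  exists2 y : 'M[K]_(mdim W, mdim Z), is_hom y & x = y *m g.
Proof.
move=> hx xf; have [_ hg _ _ _] := fg; have [sg [rh [_ _ split _]]] := ses_linear_split fg.
have Dx : x = x *m sg *m g.
  by rewrite -mulmxA -[x in LHS]mulmx1 -split mulmxDr mulmxA xf mul0mx add0r.
exists (x *m sg) => // a; set y := x *m sg in Dx *; apply: ses_epi.
by rewrite -mulmxA -hg mulmxA -Dx hx Dx !mulmxA.
Qed.

Lemma ses_section_compl (s : 'M[K]_(mdim Y, mdim Z)) : is_hom s -> g *m s = 1%:M ->
  exists2 q : 'M[K]_(mdim X, mdim Y), is_hom q &
    [/\ q *m f = 1%:M, q *m s = 0 & f *m q + s *m g = 1%:M].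
Proof.
move=> hs gs; have [_ hg _ _ _] := fg.
have [q hq Dq] : exists2 q : 'M[K]_(mdim X, mdim Y), is_hom q & 1%:M - s *m g = f *m q.
  apply: ses_hom_kerl; first by apply: is_homB; [apply: is_hom1 | apply: is_hom_mul].
  by rewrite mulmxBr mulmx1 mulmxA gs mul1mx subrr.
exists q => //; split; last by rewrite -Dq subrK.
- by apply: ses_mono; rewrite mulmxA -Dq mulmxBl mul1mx -mulmxA ses_gf mulmx0 subr0 mulmx1.
- by apply: ses_mono; rewrite mulmxA -Dq mulmxBl mul1mx -mulmxA gs mulmx1 subrr mulmx0.
Qed.

Lemma ses_retraction_compl (r : 'M[K]_(mdim X, mdim Y)) : is_hom r -> r *m f = 1%:M ->
  exists2 s : 'M[K]_(mdim Y, mdim Z), is_hom s &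
    [/\ g *m s = 1%:M, r *m s = 0 & f *m r + s *m g = 1%:M].
Proof.
move=> hr rf; have [hf _ _ _ _] := fg.
have [s hs Ds] : exists2 s : 'M[K]_(mdim Y, mdim Z), is_hom s & 1%:M - f *m r = s *m g.
  apply: ses_hom_kerr; first by apply: is_homB; [apply: is_hom1 | apply: is_hom_mul].
  by rewrite mulmxBl mul1mx -mulmxA rf mulmx1 subrr.
exists s => //; split; last by rewrite -Ds addrC subrK.
- by apply: ses_epi; rewrite -mulmxA -Ds mulmxBr mulmx1 mulmxA ses_gf mul0mx subr0 mul1mx.
- by apply: ses_epi; rewrite -mulmxA -Ds mulmxBr mulmx1 mulmxA rf mul1mx subrr mul0mx.
Qed.

End ShortExactSequence.

(** * Ext^1 and lifting of homomorphisms *)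

Definition derivation W X (c : A -> 'M[K]_(mdim X, mdim W)) :=
  (forall k a b, c (k *: a + b) = k *: c a + c b) /\
  (forall a b, c (a * b) = act X a *m c b + c a *m act W b).

Lemma Ext1_zero_inner W X (c : A -> 'M[K]_(mdim X, mdim W)) :
  Ext1_zero W X -> derivation c -> exists m, forall a, act X a *m m + c a = m *m act W a.
Proof.
move=> ext [clin cmul].
have c1 : c 1 = 0.
  by have := cmul 1 1; rewrite mulr1 !act_one mul1mx mulmx1 -[LHS]add0r => /addIr <-.
(* The extension 0 -> X -> E -> W -> 0 with cocycle c; its section gives m. *)
pose actE a := block_mx (act X a) (c a) 0 (act W a).
have linE k a b : actE (k *: a + b) = k *: actE a + actE b.
  by rewrite /actE !act_linear clin scale_block_mx add_block_mx scaler0 addr0.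
have mulE a b : actE (a * b) = actE a *m actE b.
  by rewrite /actE mulmx_block !act_mul cmul !mulmx0 !mul0mx !addr0 !add0r.
have oneE : actE 1 = 1%:M by rewrite /actE !act_one c1 -scalar_mx_block.
pose E := FDMod linE mulE oneE.
pose f : 'M[K]_(mdim E, mdim X) := col_mx 1%:M 0.
pose g : 'M[K]_(mdim W, mdim E) := row_mx 0 1%:M.
have fg : ses f g.
  split.
  - move=> a; rewrite /= /actE mul_col_mx mul_block_col.
    by rewrite mul1mx !mul0mx mulmx1 !mulmx0 !addr0.
  - move=> a; rewrite /= /actE mul_row_block mul_mx_row.
    by rewrite !mul0mx !mulmx0 mul1mx mulmx1 !add0r.
  - by move=> u; rewrite mul_col_mx mul1mx mul0mx -col_mx0 => /eq_col_mx [].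
  - move=> v; split=> [gv0 | [u ->]]; last first.
      by rewrite mul_col_mx mul_row_col !mul0mx mul1mx addr0.
    exists (usubmx v); rewrite mul_col_mx mul1mx mul0mx.
    by move: gv0; rewrite -[v]vsubmxK mul_row_col mul0mx mul1mx add0r => ->; rewrite col_mxKu.
  - by move=> w; exists (col_mx 0 w); rewrite mul_row_col mul0mx mul1mx add0r.
have [s [hs gs]] := ext E f g fg.
have s2 : dsubmx s = 1%:M.
  by move: gs; rewrite -[s]vsubmxK mul_row_col mul0mx mul1mx add0r col_mxKd.
exists (usubmx s) => a.
have := hs a; rewrite -[s]vsubmxK /= /actE mul_col_mx mul_block_col => /eq_col_mx [].
by rewrite col_mxKu s2 mulmx1 => ->.
Qed.

Lemma Ext1_zero_lift W X Y Z (f : 'M[K]_(mdim Y, mdim X)) (g : 'M[K]_(mdim Z, mdim Y)) :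
  ses f g -> Ext1_zero W X -> forall h : 'M[K]_(mdim Z, mdim W), is_hom h ->
  exists2 l : 'M[K]_(mdim Y, mdim W), is_hom l & g *m l = h.
Proof.
move=> fg ext h hh; have [hf hg _ _ _] := fg.
have [sg [rh [gs rf split gf]]] := ses_linear_split fg.
have rYf a : rh *m act Y a *m f = act X a by rewrite -mulmxA -hf mulmxA rf mul1mx.
have gYs p (w : 'M[K]_(p, mdim Z)) b : w *m g *m act Y b *m sg = w *m act Z b.
  by rewrite -(mulmxA w) hg mulmxA -mulmxA gs mulmx1.
pose c a := rh *m act Y a *m sg *m h.
have [m Hm] : exists m, forall a, act X a *m m + c a = m *m act W a.
  apply: Ext1_zero_inner ext _; split=> [k a b | a b]; rewrite /c.
    by rewrite act_linear mulmxDr -scalemxAr !mulmxDl -!scalemxAl.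
  rewrite act_mul -{1}[act Y a]mulmx1 -split !(mulmxDr, mulmxDl) !mulmxA rYf gYs.
  by rewrite -!mulmxA hh.
exists (sg *m h + f *m m); last by rewrite mulmxDr !mulmxA gs gf mul1mx mul0mx addr0.
move=> a; have Ys : act Y a *m sg = f *m (rh *m act Y a *m sg) + sg *m act Z a.
  by rewrite -[act Y a *m sg]mul1mx -split mulmxDl !mulmxA gYs.
rewrite mulmxDl mulmxDr mulmxA Ys (mulmxA (act Y a)) -hf -(mulmxA f m) -Hm.
by rewrite mulmxDr -(mulmxA sg) hh !mulmxDl !mulmxA addrA addrC addrA.
Qed.

Lemma Ext1_zero_extend W X Y Z (f : 'M[K]_(mdim Y, mdim X)) (g : 'M[K]_(mdim Z, mdim Y)) :
  ses f g -> Ext1_zero Z W -> forall h : 'M[K]_(mdim W, mdim X), is_hom h ->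
  exists2 l : 'M[K]_(mdim W, mdim Y), is_hom l & l *m f = h.
Proof.
move=> fg ext h hh; have [hf hg _ _ _] := fg.
have [sg [rh [gs rf split gf]]] := ses_linear_split fg.
have rYf p (w : 'M[K]_(p, mdim X)) a : w *m rh *m act Y a *m f = w *m act X a.
  by rewrite -mulmxA -hf mulmxA -(mulmxA w) rf mulmx1.
have gYs p (w : 'M[K]_(p, mdim Z)) b : w *m g *m act Y b *m sg = w *m act Z b.
  by rewrite -(mulmxA w) hg mulmxA -mulmxA gs mulmx1.
pose c a := h *m rh *m act Y a *m sg.
have [m Hm] : exists m, forall a, act W a *m m + c a = m *m act Z a.
  apply: Ext1_zero_inner ext _; split=> [k a b | a b]; rewrite /c.
    by rewrite act_linear mulmxDr -scalemxAr !mulmxDl -!scalemxAl.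
  rewrite act_mul -{1}[act Y a]mulmx1 -split !(mulmxDr, mulmxDl) !mulmxA rYf gYs.
  by rewrite hh.
exists (h *m rh - m *m g); last by rewrite mulmxBl -!mulmxA rf gf mulmx1 mulmx0 subr0.
move=> a; have hY : h *m rh *m act Y a = act W a *m h *m rh + c a *m g.
  by rewrite -[h *m rh *m act Y a]mulmx1 -split mulmxDr !mulmxA rYf hh.
rewrite mulmxBl hY -(mulmxA m) hg mulmxA -Hm mulmxDl mulmxBr !mulmxA.
by rewrite [act W a *m m *m g + _]addrC addrKA.
Qed.

(** * Dimensions of Hom spaces *)

Lemma subspace_basis N (P : 'rV[K]_N -> Prop) :
  P 0 -> (forall k u v, P u -> P v -> P (k *: u + v)) ->
  exists H : 'M[K]_N, forall v, (v <= H)%MS <-> P v.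
Proof.
move=> P0 Plin.
suff grow r (S : 'M[K]_N) : (forall v, (v <= S)%MS -> P v) -> (N - \rank S <= r)%N ->
    exists H : 'M[K]_N, forall v, (v <= H)%MS <-> P v.
  by apply: (grow N 0) => [v|]; [rewrite submx0 => /eqP -> | rewrite leq_subr].
elim: r S => [|r IH] S SP le_r.
  exists S => v; split=> [/SP // | _]; apply: submx_full.
  by rewrite /row_full eqn_leq rank_leq_col -subn_eq0 -leqn0.
have [[v [Pv vS]] | allS] := classic (exists v, P v /\ ~~ (v <= S)%MS); last first.
  by exists S => v; split=> [/SP // | Pv]; apply/negPn/negP => vS; apply: allS; exists v.
apply: (IH (S + v)%MS).
  move=> _ /sub_addsmxP [[u1 u2] /= ->]; rewrite [u2]mx11_scalar mul_scalar_mx addrC.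
  by apply: Plin => //; apply/SP/submxMl.
have : (\rank S < \rank (S + v)%MS)%N.
  rewrite rank_ltmx // ltmxE addsmxSl; apply: contra vS; exact: submx_trans (addsmxSr S v).
by move: le_r (rank_leq_col (S + v)%MS); lia.
Qed.

Lemma HomDim_exists X Y : exists d, HomDim X Y d.
Proof.
pose P (v : 'rV[K]_(mdim Y * mdim X)) := is_hom (vec_mx v).
have P0 : P 0 by move=> a; rewrite linear0 mul0mx mulmx0.
have Plin k u v : P u -> P v -> P (k *: u + v).
  by move=> hu hv a; rewrite linearP mulmxDl mulmxDr -scalemxAl -scalemxAr hu hv.
have [H HP] := subspace_basis P0 Plin.
exists (\rank H), (row_base H); split=> [|h]; first exact: row_base_free.
by rewrite (eq_row_base H) HP /P mxvecK.
Qed.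

Lemma HomDim_exact X1 Y1 X2 Y2 X3 Y3 d1 d2 d3
    (F : {linear 'M[K]_(mdim Y1, mdim X1) -> 'M[K]_(mdim Y2, mdim X2)})
    (G : {linear 'M[K]_(mdim Y3, mdim X3) -> 'M[K]_(mdim Y1, mdim X1)}) :
  HomDim X1 Y1 d1 -> HomDim X2 Y2 d2 -> HomDim X3 Y3 d3 -> injective G ->
  (forall y, is_hom y -> is_hom (G y) /\ F (G y) = 0) ->
  (forall x, is_hom x -> is_hom (F x)) ->
  (forall x, is_hom x -> F x = 0 -> exists2 y, is_hom y & x = G y) ->
  (forall z, is_hom z -> exists2 x, is_hom x & F x = z) <-> d1 = (d3 + d2)%N.
Proof.
move=> [U1 [/eqP r1 U1P]] [U2 [/eqP r2 U2P]] [U3 [/eqP r3 U3P]] G_inj GP FP kerF.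
pose L := lin_mx F; pose J := lin_mx G.
have vecF x : mxvec x *m L = mxvec (F x) by apply: mul_vec_lin.
have vecG y : mxvec y *m J = mxvec (G y) by apply: mul_vec_lin.
have row_hom m (X Y : fdmod A) (U : 'M[K]_(m, mdim Y * mdim X)) i :
    (forall h, is_hom h <-> (mxvec h <= U)%MS) -> is_hom (vec_mx (row i U)).
  by move=> UP; apply/UP; rewrite vec_mxK row_sub.
have imgF : (U1 *m L <= U2)%MS.
  apply/row_subP => i; rewrite row_mul -[row i U1]vec_mxK vecF.
  by apply/U2P/FP/row_hom.
have kerL : (U1 :&: kermx L :=: U3 *m J)%MS.
  apply/eqmxP/andP; split; apply/row_subP => i; last first.
    rewrite row_mul -[row i U3]vec_mxK vecG sub_capmx.
    have [hG FG0] := GP _ (row_hom _ _ _ _ i U3P).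
    by apply/andP; split; [apply/U1P | apply/sub_kermxP; rewrite vecF FG0 linear0].
  have := row_sub i (U1 :&: kermx L)%MS; rewrite -[row i _]vec_mxK sub_capmx.
  set x := vec_mx _ => /andP[/U1P hx /sub_kermxP xL0].
  have Fx0 : F x = 0 by apply/eqP; rewrite -mxvec_eq0 -vecF xL0.
  have [y hy ->] := kerF x hx Fx0.
  by rewrite -vecG submxMr //; apply/U3P.
have rankJ : \rank (U3 *m J) = \rank U3.
  apply/mxrankMfree/inj_row_free => v vJ0.
  have /eqP : mxvec (G (vec_mx v)) = 0 by rewrite -vecG vec_mxK.
  rewrite mxvec_eq0 -(linear0 G) => /eqP/G_inj v0.
  by rewrite -[v]vec_mxK v0 linear0.
rewrite -r1 -r2 -r3 -(mxrank_mul_ker U1 L) kerL rankJ addnC.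
split=> [onto | /addnI/eqP]; last rewrite (mxrank_leqif_sup imgF).2.
  congr (_ + _)%N; apply/eqP; rewrite (mxrank_leqif_sup imgF).2.
  apply/row_subP => i; have [x hx Fx] := onto _ (row_hom _ _ _ _ i U2P).
  by rewrite -[row i U2]vec_mxK -Fx -vecF submxMr //; apply/U1P.
move=> sub z /U2P/submx_trans/(_ sub)/submxP [D Dz].
exists (vec_mx (D *m U1)); first by apply/U1P; rewrite vec_mxK submxMl.
by apply: (can_inj mxvecK); rewrite -vecF vec_mxK Dz mulmxA.
Qed.

Lemma HomDim_lift W X Y Z (f : 'M[K]_(mdim Y, mdim X)) (g : 'M[K]_(mdim Z, mdim Y)) dX dY dZ :
  ses f g -> HomDim W X dX -> HomDim W Y dY -> HomDim W Z dZ ->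
  (forall h : 'M[K]_(mdim Z, mdim W), is_hom h ->
     exists2 l : 'M[K]_(mdim Y, mdim W), is_hom l & g *m l = h) <-> dY = (dX + dZ)%N.
Proof.
move=> fg DX DY DZ; have [hf hg _ _ _] := fg.
apply: (HomDim_exact (F := mulmx g) (G := mulmx f) DY DZ DX).
- by move=> u v fuv; apply: (ses_mono fg); exact: fuv.
- by move=> y hy; split; [apply: is_hom_mul | rewrite /= mulmxA (ses_gf fg) mul0mx].
- by move=> x hx; apply: is_hom_mul.
- exact: ses_hom_kerl.
Qed.

Lemma HomDim_extend W X Y Z (f : 'M[K]_(mdim Y, mdim X)) (g : 'M[K]_(mdim Z, mdim Y)) dX dY dZ :
  ses f g -> HomDim X W dX -> HomDim Y W dY -> HomDim Z W dZ ->
  (forall h : 'M[K]_(mdim W, mdim X), is_hom h ->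
     exists2 l : 'M[K]_(mdim W, mdim Y), is_hom l & l *m f = h) <-> dY = (dZ + dX)%N.
Proof.
move=> fg DX DY DZ; have [hf hg _ _ _] := fg.
apply: (HomDim_exact (F := mulmxr f) (G := mulmxr g) DY DX DZ).
- by move=> u v fuv; apply: (ses_epi fg); exact: fuv.
- by move=> y hy; split; [apply: is_hom_mul | rewrite /= -mulmxA (ses_gf fg) mulmx0].
- by move=> x hx; apply: is_hom_mul.
- exact: ses_hom_kerr.
Qed.

(** * Direct summands and idempotents *)

Section SplitIdempotents.
Variables (x X Y : fdmod A).
Variables (i : 'M[K]_(mdim x, mdim X)) (p : 'M[K]_(mdim X, mdim x)).
Variables (j : 'M[K]_(mdim x, mdim Y)) (q : 'M[K]_(mdim Y, mdim x)).
Hypotheses (hi : is_hom i) (hp : is_hom p) (hj : is_hom j) (hq : is_hom q).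
Hypotheses (pi1 : p *m i = 1%:M) (qj1 : q *m j = 1%:M).

Lemma split_idem_decomp : p *m j = 0 -> q *m i = 0 -> i *m p + j *m q = 1%:M ->
  idem_decomp (act x) 1 (i *m p) (j *m q).
Proof.
move=> pj0 qi0 sum1; split=> //; [exact: is_hom_mul | exact: is_hom_mul |].
split; rewrite -mulmxE mulmxA; [rewrite -(mulmxA i) pi1 | rewrite -(mulmxA j) qj1 |
  rewrite -(mulmxA i) pj0 | rewrite -(mulmxA j) qi0]; by rewrite ?mulmx1 ?mulmx0 ?mul0mx.
Qed.

Lemma mod_iso_of_idem_equiv : idem_equiv (act x) (i *m p) (j *m q) -> mod_iso X Y.
Proof.
move=> [a [b [[ca cb] aC bC ba ab]]].
have ipK : i *m p * (i *m p) = i *m p by rewrite -mulmxE mulmxA -(mulmxA i) pi1 mulmx1.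
have jqK : j *m q * (j *m q) = j *m q by rewrite -mulmxE mulmxA -(mulmxA j) qj1 mulmx1.
have [_ a_ip] := corner_id ipK jqK aC; have [_ b_jq] := corner_id jqK ipK bC.
have {}a_ip : a *m (i *m p) = a := a_ip; have {}b_jq : b *m (j *m q) = b := b_jq.
have {}ab : a *m b = j *m q := ab; have {}ba : b *m a = i *m p := ba.
exists (q *m a *m i), (p *m b *m j); split.
- by apply: is_hom_mul => //; apply: is_hom_mul.
- by apply: is_hom_mul => //; apply: is_hom_mul.
- rewrite -!mulmxA [i *m (p *m _)]mulmxA [a *m (_ *m _)]mulmxA a_ip.
  by rewrite [a *m _]mulmxA ab -mulmxA qj1 mulmx1 qj1.
- rewrite -!mulmxA [j *m (q *m _)]mulmxA [b *m (_ *m _)]mulmxA b_jq.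
  by rewrite [b *m _]mulmxA ba -mulmxA pi1 mulmx1 pi1.
Qed.

End SplitIdempotents.

Lemma idem_equiv_of_split x X (i i' : 'M[K]_(mdim x, mdim X)) (p p' : 'M[K]_(mdim X, mdim x)) :
  is_hom i -> is_hom p -> is_hom i' -> is_hom p' -> p *m i = 1%:M -> p' *m i' = 1%:M ->
  idem_equiv (act x) (i *m p) (i' *m p').
Proof.
move=> hi hp hi' hp' pi1 pi1'; exists (i' *m p), (i *m p'); split.
- by split; apply: is_hom_mul.
- rewrite -!mulmxE -!mulmxA [p' *m (i' *m _)]mulmxA pi1' mul1mx.
  by rewrite [p *m (i *m _)]mulmxA pi1 mul1mx.
- rewrite -!mulmxE -!mulmxA [p *m (i *m _)]mulmxA pi1 mul1mx.
  by rewrite [p' *m (i' *m _)]mulmxA pi1' mul1mx.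
- by rewrite -mulmxE -!mulmxA [p' *m (i' *m _)]mulmxA pi1' mul1mx.
- by rewrite -mulmxE -!mulmxA [p *m (i *m _)]mulmxA pi1 mul1mx.
Qed.

End Modules.

Theorem lemma6p2 (K : fieldType) (A : algType K) (x x1 x2 x3 : fdmod A)
    (f1 : 'M[K]_(mdim x, mdim x2)) (g1 : 'M[K]_(mdim x1, mdim x))
    (f2 : 'M[K]_(mdim x, mdim x1)) (g2 : 'M[K]_(mdim x3, mdim x)) :
  ses f1 g1 -> ses f2 g2 ->
  Ext1_zero x1 x1 ->
  (exists d, HomDim x1 x2 d /\ HomDim x1 x3 d) ->
  (exists d, HomDim x2 x1 d /\ HomDim x3 x1 d) ->
  [/\ ses_splits f1 g1, ses_splits f2 g2 & mod_iso x2 x3].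
Proof.
move=> S1 S2 ext [d [D12 D13]] [d' [D21 D31]].
have [[hf1 hg1 _ _ _] [hf2 hg2 _ _ _]] := (S1, S2).
have [d11 D11] := HomDim_exists x1 x1.
have [d1x D1x] := HomDim_exists x1 x; have [dx1 Dx1] := HomDim_exists x x1.
have dim1x : d1x = (d + d11)%N.
  by rewrite addnC; apply/(HomDim_lift S2 D11 D1x D13); apply: Ext1_zero_lift S2 ext.
have dimx1 : dx1 = (d' + d11)%N.
  by rewrite addnC; apply/(HomDim_extend S1 D21 Dx1 D11); apply: Ext1_zero_extend S1 ext.
have [s1 hs1 g1s1] := (HomDim_lift S1 D12 D1x D11).2 dim1x _ (is_hom1 x1).
have [r2 hr2 r2f2] := (HomDim_extend S2 D11 Dx1 D31).2 dimx1 _ (is_hom1 x1).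
have [q1 hq1 [q1f1 q1s1 split1]] := ses_section_compl S1 hs1 g1s1.
have [s2 hs2 [g2s2 r2s2 split2]] := ses_retraction_compl S2 hr2 r2f2.
split; [by exists s1 | by exists s2 |].
apply: (mod_iso_of_idem_equiv hf1 hq1 hs2 hg2 q1f1 g2s2).
apply: (@idem_equiv_cancel _ _ _ _ 1 (s1 *m g1) _ (f2 *m r2)).
- by apply: split_idem_decomp; rewrite ?(ses_gf S1) // addrC.
- by apply: split_idem_decomp; rewrite ?(ses_gf S2).
- exact: idem_equiv_of_split.
Qed.
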